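(* There exists an elliptic curve $E$ defined over $\mathbf{Q}$ with $S_y(E) \geq 7$; that is, there exist an elliptic curve $E/\mathbf{Q}$ and seven distinct rational points $P_1,\dots,P_7 \in E(\mathbf{Q})$ whose $y$-coordinates, after a suitable reordering, form an arithmetic progression with nonzero common difference.
   Context: An elliptic curve over $\mathbf{Q}$ is given by a general Weierstrass equation $Y^2 + a_1XY + a_3Y = X^3 + a_2X^2 + a_4X + a_6$ with $a_i \in \mathbf{Q}$ and nonzero discriminant. Rational points $P_0,\dots,P_n \in E$ are said to form a $y$-arithmetic progression if their $y$-coordinates (not necessarily in the order of the indices) form an arithmetic progression with nonzero common difference; $S_y(E)$ denotes the maximal number of rational points of $E$ forming a $y$-arithmetic progression. *)

From mathcomp Require Import all_boot all_order all_algebra.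
Set Implicit Arguments. Unset Strict Implicit. Unset Printing Implicit Defensive.
Import Order.TTheory GRing.Theory Num.Theory.
Local Open Scope ring_scope.

Record weierstrass := Weierstrass { a1 : rat; a2 : rat; a3 : rat; a4 : rat; a6 : rat }.

Definition b2 (E : weierstrass) : rat := a1 E ^+ 2 + 4 * a2 E.
Definition b4 (E : weierstrass) : rat := 2 * a4 E + a1 E * a3 E.
Definition b6 (E : weierstrass) : rat := a3 E ^+ 2 + 4 * a6 E.
Definition b8 (E : weierstrass) : rat :=
  a1 E ^+ 2 * a6 E + 4 * a2 E * a6 E - a1 E * a3 E * a4 E
  + a2 E * a3 E ^+ 2 - a4 E ^+ 2.

Definition disc (E : weierstrass) : rat :=
  - b2 E ^+ 2 * b8 E - 8 * b4 E ^+ 3 - 27 * b6 E ^+ 2 + 9 * b2 E * b4 E * b6 E.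

Definition is_elliptic (E : weierstrass) : Prop := disc E != 0.

Definition on_curve (E : weierstrass) (P : rat * rat) : Prop :=
  let: (x, y) := P in
  y ^+ 2 + a1 E * x * y + a3 E * y = x ^+ 3 + a2 E * x ^+ 2 + a4 E * x + a6 E.

From mathcomp Require Import all_boot all_order all_algebra all_fingroup.
From mathcomp Require Import ring lra.
Import GRing.Theory Num.Theory.
Local Open Scope ring_scope.

(* The Weierstrass equation is linear in (a1, a2, a3, a4, a6), so requiring it
   at the seven points (x_i, i), i = 0..6, is a linear system of seven
   equations in five unknowns; the abscissae x_i below make it consistent,
   and its solution has nonzero discriminant. *)

Definition curve7 : weierstrass :=
  Weierstrass (-5/2) (1/2) (-19/2) (-14) (-39/2).

Definition abscissae7 : seq rat := [:: -3; -1; -3; 0; 1; -2; -1].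

Definition point7 (i : 'I_7) : rat * rat := (nth 0 abscissae7 i, i%:R).

Lemma curve7_disc_lt0 : disc curve7 < 0.
Proof. rewrite /disc /b2 /b4 /b6 /b8 /=; lra. Qed.

Lemma curve7_elliptic : is_elliptic curve7.
Proof. exact: ltr0_neq0 curve7_disc_lt0. Qed.

Lemma point7_inj : injective point7.
Proof.
move=> i j /(congr1 snd) /= /eqP; rewrite eqr_nat => /eqP eq_ij.
exact: val_inj.
Qed.

Lemma point7_on_curve (i : 'I_7) : on_curve curve7 (point7 i).
Proof.
by case: i => [[|[|[|[|[|[|[|n]]]]]]] lt_i7] //; rewrite /on_curve /point7 /=; field.
Qed.

Theorem theorem1 :
  exists (E : weierstrass), is_elliptic E /\
  exists P : 'I_7 -> rat * rat,
    injective P /\ (forall i, on_curve E (P i)) /\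
    exists (s : 'S_7) (a d : rat), d != 0 /\
      forall i : 'I_7, (P (s i)).2 = a + d * (nat_of_ord i)%:R.
Proof.
exists curve7; split; first exact: curve7_elliptic.
exists point7; split; first exact: point7_inj.
split; first exact: point7_on_curve.
exists 1%g, 0, 1; split=> // i.
by rewrite perm1 add0r mul1r.
Qed.
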